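(* In the stochastic epidemic model described in the context, let $u(k)=K\,I(k)$ for all $k\ge0$ with a constant gain $0\le K\le (1-d_{\max})/v_{\max}$. Then for every $k\ge1$, $$\mathbb{E}[D(k)]=\begin{cases}\dfrac{\overline{d_I}\,I_0\left(1-(1+\overline{\delta}-\overline{d_I}-K\overline{v})^k\right)}{K\overline{v}-\overline{\delta}+\overline{d_I}}, & K\overline{v}-\overline{\delta}+\overline{d_I}>0,\\[2mm] \overline{d_I}\,I_0\,k, & K\overline{v}-\overline{\delta}+\overline{d_I}=0.\end{cases}$$
   Context: Time is indexed by days $k=0,1,2,\dots$. Let $(\delta(k))_{k\ge0}$, $(d_I(k))_{k\ge0}$, $(v(k))_{k\ge0}$ be three mutually independent sequences of random variables, each sequence i.i.d. in $k$, with $0\le \delta(k)\le \delta_{\max}$, $0\le d_I(k)\le d_{\max}$ where $d_{\max}<1$, and $0<v_{\min}\le v(k)\le v_{\max}\le 1$. Write $\overline{\delta}=\mathbb{E}[\delta(k)]$, $\overline{d_I}=\mathbb{E}[d_I(k)]$, $\overline{v}=\mathbb{E}[v(k)]$. Given a control sequence $u(k)$, the cases evolve by $S(k+1)=S(k)-\delta(k)I(k)$, $I(k+1)=(1+\delta(k))I(k)-v(k)u(k)-d_I(k)I(k)$, $R(k+1)=R(k)+v(k)u(k)$, $D(k+1)=D(k)+d_I(k)I(k)$, with $S(0)=S_0$, $I(0)=I_0>0$, $R(0)=D(0)=0$, $I_0\delta_{\max}<S_0$. *)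

From HB Require Import structures.
From mathcomp Require Import all_boot all_order all_algebra.
From mathcomp Require Import all_classical all_reals all_analysis.
Set Implicit Arguments. Unset Strict Implicit. Unset Printing Implicit Defensive.
Import Order.TTheory GRing.Theory Num.Theory.
Local Open Scope classical_set_scope.
Local Open Scope ring_scope.

Definition mutually_independent {d} {T : measurableType d} {R : realType}
  (P : probability T R) {I : eqType} (X : I -> T -> R) : Prop :=
  forall (J : seq I) (B : I -> set R),
    uniq J -> (forall i, i \in J -> measurable (B i)) ->
    P (\bigcap_(i in [set i | i \in J]) (X i @^-1` B i)) =
    (\prod_(i <- J) P (X i @^-1` B i))%E.

Definition identically_distributed {d} {T : measurableType d} {R : realType}
  (P : probability T R) (X : nat -> T -> R) : Prop :=
  forall (k : nat) (B : set R), measurable B ->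
    P (X k @^-1` B) = P (X 0%N @^-1` B).

Definition three_seqs {T R : Type} (a b c : nat -> T -> R)
  (i : nat + (nat + nat)) : T -> R :=
  match i with
  | inl k => a k
  | inr (inl k) => b k
  | inr (inr k) => c k
  end.

From HB Require Import structures.
From mathcomp Require Import all_boot all_order all_algebra.
From mathcomp Require Import all_classical all_reals all_analysis.
From mathcomp Require Import measurable_realfun ring lra.
Import Order.TTheory GRing.Theory Num.Theory.
Local Open Scope classical_set_scope.
Local Open Scope ring_scope.

(* With g_i = 1 + delta_i - K v_i - dI_i the dynamics give I_k = I0 g_0 ... g_(k-1), hence
   D_k = I0 sum_(j<k) dI_j g_0 ... g_(j-1). Expanding the product, every monomial involves each
   variable at most once, so by independence its mean is the product of the means; thus
   E[dI_j g_0 ... g_(j-1)] = dI_bar a^j with a = 1 + delta_bar - dI_bar - K v_bar, and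
   E[D_k] = I0 dI_bar (1 + a + ... + a^(k-1)) is a geometric sum.
   Independence is assumed for events only. It extends to products of bounded nonnegative
   variables because each one is uniformly approximated from below by a staircase function,
   a combination of indicators of its level sets, for which the product rule reduces to the
   event version. *)

Set Implicit Arguments.
Unset Strict Implicit.
Unset Printing Implicit Defensive.

Section real_bounds.
Context {R : realType}.

(* [e * min(N, floor(x / e))] *)
Definition staircase (e : R) (N : nat) (x : R) : R :=
  \sum_(k < N) e * ((e * k.+1%:R <= x)%R)%:R.

Lemma staircase_approx (e x : R) N : 0 < e -> 0 <= x ->
  0 <= staircase e N x <= x /\ (x < e * N%:R -> x - e < staircase e N x).
Proof.
move=> e0 x0.
suff [s0 sx sN _] : [/\ 0 <= staircase e N x, staircase e N x <= x,
    (x < e * N%:R -> x - e < staircase e N x) &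
    (e * N%:R <= x -> staircase e N x = e * N%:R)] by rewrite s0 sx.
elim: N => [|N [s0 sx sN sN']]; first by rewrite /staircase big_ord0 mulr0; split=> //; lra.
rewrite /staircase big_ord_recr /= -/(staircase e N x) -natr1.
have [xN1|xN1] := lerP (e * (N%:R + 1)) x.
  have xN : e * N%:R <= x by nra.
  by rewrite mulr1 sN' //; split=> //; lra.
rewrite mulr0 addr0; split=> // _.
by have [/sN'->|/sN//] := lerP (e * N%:R) x; lra.
Qed.

Lemma prodr_itv (J : Type) (s : seq J) (x : J -> R) B :
  (forall i, 0 <= x i <= B) -> 0 <= \prod_(i <- s) x i <= B ^+ size s.
Proof.
move=> xB; elim: s => [|i s /andP[p0 pB]]; first by rewrite big_nil expr0 ler01 lexx.
by have /andP[xi0 xiB] := xB i; rewrite big_cons exprS mulr_ge0 ?ler_pM.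
Qed.

Lemma ler_dist_prod (J : Type) (s : seq J) (x y : J -> R) B e :
  1 <= B -> (forall i, 0 <= x i <= B) -> (forall i, 0 <= y i <= B) ->
  (forall i, `|x i - y i| <= e) ->
  `|\prod_(i <- s) x i - \prod_(i <- s) y i| <= (size s)%:R * B ^+ size s * e.
Proof.
move=> B1 xB yB xye; elim: s => [|i s IHs]; first by rewrite !big_nil subrr normr0 !mul0r.
rewrite !big_cons /= exprS -natr1.
set px := \prod_(j <- s) x j; set py := \prod_(j <- s) y j.
have /andP[py0 pyB] : 0 <= py <= B ^+ size s := prodr_itv s yB.
have /andP[xi0 xiB] := xB i; have e0 : 0 <= e := le_trans (normr_ge0 _) (xye i).
have : `|x i * (px - py)| <= B * ((size s)%:R * B ^+ size s * e).
  by rewrite normrM (ger0_norm xi0); apply: ler_pM.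
have : `|(x i - y i) * py| <= e * (B * B ^+ size s).
  rewrite normrM (ger0_norm py0); apply: ler_pM => //.
  exact: le_trans pyB (ler_peMl (le_trans py0 pyB) B1).
have := ler_normD (x i * (px - py)) ((x i - y i) * py).
have -> : x i * (px - py) + (x i - y i) * py = x i * px - y i * py by ring.
lra.
Qed.

Lemma eq0_norm_le_eps (a C : R) : 0 <= C -> (forall e, 0 < e -> `|a| <= C * e) -> a = 0.
Proof.
move=> C0 aC; apply/normr0_eq0/le_anti; rewrite normr_ge0 andbT.
apply/ler_addgt0Pr => e e0; rewrite add0r.
have C1 : 0 < C + 1 by lra.
apply: le_trans (aC _ (divr_gt0 e0 C1)) _.
by rewrite mulrCA ger_pMr // ler_pdivrMr // mul1r lerDl.
Qed.

End real_bounds.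

Section bounded_measurable.
Context {d} {T : measurableType d} {R : realType} (P : probability T R).
Implicit Types (f g : T -> R) (A : set T).

Definition bmeasurable f := measurable_fun setT f /\ exists M, forall x, `|f x| <= M.

Lemma bmeasurable_cst c : bmeasurable (fun=> c).
Proof. by split; [exact: measurable_cst | exists `|c|]. Qed.

Lemma bmeasurableD f g : bmeasurable f -> bmeasurable g ->
  bmeasurable (fun x => f x + g x).
Proof.
move=> [mf [M fM]] [mg [N gN]]; split; first exact: measurable_funD.
by exists (M + N) => x; rewrite (le_trans (ler_normD _ _)) ?lerD.
Qed.

Lemma bmeasurableM f g : bmeasurable f -> bmeasurable g ->
  bmeasurable (fun x => f x * g x).
Proof.
move=> [mf [M fM]] [mg [N gN]]; split; first exact: measurable_funM.
by exists (M * N) => x; rewrite normrM ler_pM.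
Qed.

Lemma bmeasurableN f : bmeasurable f -> bmeasurable (fun x => - f x).
Proof.
move=> bf; have := bmeasurableM (bmeasurable_cst (-1)) bf.
by under [fun x => -1 * _]funext do rewrite mulN1r.
Qed.

Lemma bmeasurableB f g : bmeasurable f -> bmeasurable g ->
  bmeasurable (fun x => f x - g x).
Proof. by move=> bf bg; apply: bmeasurableD bf (bmeasurableN bg). Qed.

Lemma bmeasurable_indic A : measurable A -> bmeasurable (\1_A).
Proof.
move=> mA; split; first exact: measurable_indic.
by exists 1 => x; rewrite indicE; case: (x \in A); rewrite ?normr1 ?normr0.
Qed.

Lemma bmeasurable_sum (J : Type) (s : seq J) (F : J -> T -> R) :
  (forall i, bmeasurable (F i)) -> bmeasurable (fun x => \sum_(i <- s) F i x).
Proof.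
move=> bF; elim: s => [|i s IHs].
  by under eq_fun do rewrite big_nil; exact: bmeasurable_cst.
by under eq_fun do rewrite big_cons; exact: bmeasurableD.
Qed.

Lemma bmeasurable_prod (J : Type) (s : seq J) (F : J -> T -> R) :
  (forall i, bmeasurable (F i)) -> bmeasurable (fun x => \prod_(i <- s) F i x).
Proof.
move=> bF; elim: s => [|i s IHs].
  by under eq_fun do rewrite big_nil; exact: bmeasurable_cst.
by under eq_fun do rewrite big_cons; exact: bmeasurableM.
Qed.

Lemma bmeasurable_Lfun f : bmeasurable f -> f \in Lfun P 1.
Proof.
move=> [mf [M fM]]; apply/Lfun1_integrable.
apply: measurable_bounded_integrable => //.
  by have /= -> := probability_setT P; rewrite ltry.
by exists M; split=> [|y My x _]; [exact: num_real | exact: le_trans (fM x) (ltW My)].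
Qed.

(* [fine] sends infinite expectations to 0: [mean] is only meaningful for integrable [f]. *)
Definition mean f := fine 'E_P[f]%E.

Lemma meanE f : bmeasurable f -> ('E_P[f] = (mean f)%:E)%E.
Proof. by move=> bf; rewrite fineK// expectation_fin_num// bmeasurable_Lfun. Qed.

Lemma mean_cst c : mean (fun=> c) = c.
Proof. by rewrite /mean expectation_cst. Qed.

Lemma mean_indic A : measurable A -> mean (\1_A) = fine (P A).
Proof. by move=> mA; rewrite /mean expectation_indic. Qed.

Lemma meanD f g : bmeasurable f -> bmeasurable g ->
  mean (fun x => f x + g x) = mean f + mean g.
Proof.
move=> bf bg; apply: EFin_inj; rewrite -meanE; last exact: bmeasurableD.
by rewrite (expectationD (bmeasurable_Lfun bf) (bmeasurable_Lfun bg)) !meanE.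
Qed.

Lemma meanZ c f : bmeasurable f -> mean (fun x => c * f x) = c * mean f.
Proof.
move=> bf; apply: EFin_inj.
rewrite -meanE; last exact: bmeasurableM (bmeasurable_cst c) bf.
under eq_fun do rewrite mulrC.
by rewrite (expectationZl c (bmeasurable_Lfun bf)) meanE.
Qed.

Lemma meanB f g : bmeasurable f -> bmeasurable g ->
  mean (fun x => f x - g x) = mean f - mean g.
Proof.
move=> bf bg; rewrite meanD; [|by []|exact: bmeasurableN].
by under eq_fun do rewrite -mulN1r; rewrite meanZ ?mulN1r.
Qed.

Lemma mean_sum (J : Type) (s : seq J) (F : J -> T -> R) :
  (forall i, bmeasurable (F i)) ->
  mean (fun x => \sum_(i <- s) F i x) = \sum_(i <- s) mean (F i).
Proof.
move=> bF; elim: s => [|i s IHs].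
  by under eq_fun do rewrite big_nil; rewrite mean_cst big_nil.
under eq_fun do rewrite big_cons.
by rewrite meanD ?big_cons ?IHs//; exact: bmeasurable_sum.
Qed.

Lemma mean_bounds f (lo hi : R) : bmeasurable f -> (forall x, lo <= f x <= hi) ->
  lo <= mean f <= hi.
Proof.
have mean_ge0 g : bmeasurable g -> (forall x, 0 <= g x) -> 0 <= mean g.
  by move=> bg g0; rewrite -lee_fin -meanE// expectation_ge0.
move=> bf fb; have bcst := bmeasurable_cst.
have lo_le : 0 <= mean (fun x => f x - lo).
  by apply: mean_ge0 => [|x]; [exact: bmeasurableB | rewrite subr_ge0; case/andP: (fb x)].
have le_hi : 0 <= mean (fun x => hi - f x).
  by apply: mean_ge0 => [|x]; [exact: bmeasurableB | rewrite subr_ge0; case/andP: (fb x)].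
by move: lo_le le_hi; rewrite !meanB// !mean_cst !subr_ge0 => -> ->.
Qed.

Lemma ler_dist_mean_prod (J : Type) (s : seq J) (F G : J -> T -> R) B e :
  1 <= B -> (forall i, bmeasurable (F i)) -> (forall i, bmeasurable (G i)) ->
  (forall i x, 0 <= F i x <= B) -> (forall i x, 0 <= G i x <= B) ->
  (forall i x, `|F i x - G i x| <= e) ->
  `|mean (fun x => \prod_(i <- s) F i x) - mean (fun x => \prod_(i <- s) G i x)|
    <= (size s)%:R * B ^+ size s * e.
Proof.
move=> B1 bF bG FB GB FGe; rewrite -meanB ?ler_norml; try exact: bmeasurable_prod.
apply: mean_bounds => [|x]; first by apply: bmeasurableB; exact: bmeasurable_prod.
by rewrite -ler_norml; apply: ler_dist_prod.
Qed.

End bounded_measurable.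

Section independence.
Context {d} {T : measurableType d} {R : realType} (P : probability T R).
Context (I : eqType) (X : I -> T -> R).
Hypothesis mX : forall i, measurable_fun setT (X i).
Hypothesis indep : mutually_independent P X.

Definition joint_event (J : seq I) (B : I -> set R) : set T :=
  \bigcap_(i in [set i | i \in J]) (X i @^-1` B i).

Lemma measurable_preimage i A : measurable A -> measurable (X i @^-1` A).
Proof. by move=> mA; rewrite -[X in measurable X]setTI; exact: mX. Qed.

Lemma joint_event_nil B : joint_event [::] B = setT.
Proof. by apply/seteqP; split=> // w _ i; rewrite /= in_nil. Qed.

Lemma joint_event_cons i J B :
  joint_event (i :: J) B = X i @^-1` B i `&` joint_event J B.
Proof.
apply/seteqP; split=> w /=.
  by move=> XB; split=> [|j jJ]; apply: XB; rewrite /= inE ?eqxx ?jJ ?orbT.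
by move=> [XiB XB] j /=; rewrite inE => /orP[/eqP-> //|]; exact: XB.
Qed.

Lemma eq_joint_event J B B' : {in J, B =1 B'} -> joint_event J B = joint_event J B'.
Proof.
by move=> BB'; apply/seteqP; split=> w XB j jJ; [rewrite -BB' | rewrite BB'] => //; exact: XB.
Qed.

Lemma measurable_joint_event J B : (forall i, measurable (B i)) ->
  measurable (joint_event J B).
Proof.
move=> mB; elim: J => [|i J IHJ]; first by rewrite joint_event_nil.
by rewrite joint_event_cons; apply: measurableI => //; exact: measurable_preimage.
Qed.

Lemma prob_joint_event_cons i J B : uniq (i :: J) -> (forall j, measurable (B j)) ->
  fine (P (joint_event (i :: J) B)) =
  fine (P (X i @^-1` B i)) * fine (P (joint_event J B)).
Proof.
move=> iJ mB; have /andP[_ uJ] := iJ.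
rewrite /joint_event indep // big_cons -indep // fineM //; apply: fin_num_measure.
  exact: measurable_preimage.
exact: measurable_joint_event.
Qed.

Lemma staircase_indic e N i w :
  staircase e N (X i w) = \sum_(k < N) e * \1_(X i @^-1` `[e * k.+1%:R, +oo[) w.
Proof.
apply: eq_bigr => k _; rewrite indicE; congr (_ * (nat_of_bool _)%:R).
by apply/idP/idP => [h|/set_mem]; [apply/mem_set | ]; rewrite /= in_itv /= andbT.
Qed.

Lemma bmeasurable_staircase e N i : bmeasurable (fun w => staircase e N (X i w)).
Proof.
under eq_fun do rewrite staircase_indic.
apply: bmeasurable_sum => k; apply: bmeasurableM (bmeasurable_cst e) _.
by apply: bmeasurable_indic; apply: measurable_preimage; exact: measurable_itv.
Qed.

Lemma mean_staircase e N i : mean P (fun w => staircase e N (X i w)) =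
  \sum_(k < N) e * fine (P (X i @^-1` `[e * k.+1%:R, +oo[)).
Proof.
have mE k : measurable (X i @^-1` `[e * k.+1%:R, +oo[).
  by apply: measurable_preimage; exact: measurable_itv.
under eq_fun do rewrite staircase_indic.
rewrite mean_sum => [|k]; last first.
  exact: bmeasurableM (bmeasurable_cst e) (bmeasurable_indic (mE k)).
by apply: eq_bigr => k _; rewrite meanZ ?mean_indic //; exact: bmeasurable_indic.
Qed.

(* Splitting the staircase of [X s] into indicators of its level sets, each level set joins
   the event on [J]; as [s] is fresh for [J], independence splits it off again. *)
Lemma mean_prod_staircase_joint_event e N (S J : seq I) (B : I -> set R) :
  uniq (S ++ J) -> (forall i, measurable (B i)) ->
  mean P (fun w => (\prod_(s <- S) staircase e N (X s w)) * \1_(joint_event J B) w) =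
  (\prod_(s <- S) mean P (fun w => staircase e N (X s w))) * fine (P (joint_event J B)).
Proof.
elim: S J B => [|s S IHS] J B uSJ mB.
  under eq_fun do rewrite big_nil mul1r.
  by rewrite big_nil mul1r mean_indic //; exact: measurable_joint_event.
have sJ : s \notin J by move: uSJ; rewrite /= mem_cat negb_or => /andP[/andP[_ ->]].
have {}uSJ : uniq (S ++ s :: J) by rewrite -cat1s uniq_catCA.
have usJ : uniq (s :: J) by move: uSJ; rewrite cat_uniq => /and3P[].
pose level k := (`[e * k.+1%:R, +oo[%classic : set R).
pose B' k i := if i == s then level k else B i.
have mB' k i : measurable (B' k i).
  by rewrite /B'; case: ifP => _ //; exact: measurable_itv.
have B'B k : {in J, B' k =1 B}.
  by move=> i iJ; rewrite /B'; case: eqP => // eq_is; move: sJ; rewrite -eq_is iJ.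
have levelJ k : X s @^-1` level k `&` joint_event J B = joint_event (s :: J) (B' k).
  by rewrite joint_event_cons /B' eqxx (eq_joint_event (B'B k)).
have bprod : bmeasurable (fun w => \prod_(s <- S) staircase e N (X s w)).
  by apply: bmeasurable_prod => i; exact: bmeasurable_staircase.
under eq_fun do rewrite big_cons staircase_indic mulr_suml mulr_suml.
rewrite mean_sum => [|k]; last first.
  apply: bmeasurableM; last exact/bmeasurable_indic/measurable_joint_event.
  apply: bmeasurableM bprod; apply: bmeasurableM (bmeasurable_cst e) (bmeasurable_indic _).
  exact: measurable_preimage.
rewrite big_cons mean_staircase !mulr_suml; apply: eq_bigr => k _.
rewrite (_ : (fun w => _) = fun w =>
    e * ((\prod_(j <- S) staircase e N (X j w)) * \1_(joint_event (s :: J) (B' k)) w)).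
  rewrite meanZ; last exact/bmeasurableM/bmeasurable_indic/measurable_joint_event.
  rewrite IHS // prob_joint_event_cons // /B' eqxx -/B' (eq_joint_event (B'B k)).
  by ring.
by apply/funext => w; rewrite -levelJ indicI /=; ring.
Qed.

Variable M : R.
Hypothesis X_itv : forall i w, 0 <= X i w <= M.

Lemma bmeasurable_var i : bmeasurable (X i).
Proof.
by split=> //; exists M => w; have /andP[X0 XM] := X_itv i w; rewrite ger0_norm.
Qed.

Lemma mean_prod_indep (S : seq I) : uniq S ->
  mean P (fun w => \prod_(s <- S) X s w) = \prod_(s <- S) mean P (X s).
Proof.
move=> uS; set B := `|M| + 1.
have B1 : 1 <= B by rewrite lerDr.
have MB : M < B by have := ler_norm M; rewrite /B; lra.
set C := (size S)%:R * B ^+ size S.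
have C0 : 0 <= C by rewrite mulr_ge0 // exprn_ge0 // (le_trans ler01).
apply/eqP; rewrite -subr_eq0; apply/eqP/(@eq0_norm_le_eps _ _ (C + C)); first lra.
move=> e e0; pose N := (Num.truncn (B / e)).+1.
have BN : B < e * N%:R by rewrite mulrC -ltr_pdivrMr // truncnS_gt.
pose psi s w := staircase e N (X s w).
have psi_approx s w : 0 <= psi s w <= B /\ `|X s w - psi s w| <= e.
  have /andP[X0 XM] := X_itv s w.
  have [/andP[p0 pX] pN] := staircase_approx N e0 X0.
  have := pN (le_lt_trans XM (lt_trans MB BN)).
  by rewrite /psi ger0_norm ?subr_ge0 // p0 /= => ?; split; lra.
have bpsi s : bmeasurable (psi s) by exact: bmeasurable_staircase.
have mean_prod_psi :
    mean P (fun w => \prod_(s <- S) psi s w) = \prod_(s <- S) mean P (psi s).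
  have := mean_prod_staircase_joint_event e N (S := S) (J := [::]) (B := fun=> setT).
  rewrite cats0 joint_event_nil probability_setT mulr1 => /(_ uS (fun=> measurableT)) <-.
  by under [in RHS]eq_fun do rewrite indicT mulr1.
have X_psi : `|mean P (fun w => \prod_(s <- S) X s w) -
               mean P (fun w => \prod_(s <- S) psi s w)| <= C * e.
  apply: ler_dist_mean_prod => // [i|i w|i w|i w]; first exact: bmeasurable_var.
  - by have /andP[-> XM] := X_itv i w; lra.
  - by case: (psi_approx i w).
  - by case: (psi_approx i w).
have psi_X : `|\prod_(s <- S) mean P (psi s) - \prod_(s <- S) mean P (X s)| <= C * e.
  rewrite distrC; apply: ler_dist_prod => // i.
  - by apply: mean_bounds (bmeasurable_var i) _ => w; have /andP[-> XM] := X_itv i w; lra.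
  - by apply: mean_bounds (bpsi i) _ => w; case: (psi_approx i w).
  rewrite -meanB ?ler_norml; [|exact: bmeasurable_var|by []].
  apply: mean_bounds => [|w]; first exact: bmeasurableB (bmeasurable_var i) (bpsi i).
  by rewrite -ler_norml; case: (psi_approx i w).
rewrite mulrDl; apply: le_trans (lerD X_psi psi_X).
by rewrite mean_prod_psi; apply: le_trans (ler_normD _ _); rewrite addrA subrK.
Qed.

End independence.

Section epidemic.
Context {d} {T : measurableType d} {R : realType} (P : probability T R).
Variables (delta dI v : nat -> T -> R) (K delta_bar dI_bar v_bar M : R).
Hypothesis mX : forall i, measurable_fun setT (three_seqs delta dI v i).
Hypothesis indep : mutually_independent P (three_seqs delta dI v).
Hypothesis X_itv : forall i w, 0 <= three_seqs delta dI v i w <= M.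
Hypothesis mean_delta : forall k, ('E_P[delta k] = delta_bar%:E)%E.
Hypothesis mean_dI : forall k, ('E_P[dI k] = dI_bar%:E)%E.
Hypothesis mean_v : forall k, ('E_P[v k] = v_bar%:E)%E.

Definition growth (k : nat) (w : T) : R := 1 + delta k w - K * v k w - dI k w.

Definition day (i : nat + (nat + nat)) : nat :=
  match i with inl k | inr (inl k) | inr (inr k) => k end.

Let X := three_seqs delta dI v.
Let a := 1 + delta_bar - dI_bar - K * v_bar.

Lemma bmeasurable_growth k : bmeasurable (growth k).
Proof.
have bX := bmeasurable_var mX X_itv.
apply: bmeasurableB (bX (inr (inl k))).
apply: bmeasurableB (bmeasurableM (bmeasurable_cst K) (bX (inr (inr k)))).
exact: bmeasurableD (bmeasurable_cst 1) (bX (inl k)).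
Qed.

Lemma bmeasurable_prod_growth j : bmeasurable (fun w => \prod_(i < j) growth i w).
Proof. by apply: bmeasurable_prod => i; exact: bmeasurable_growth. Qed.

Lemma mean_prod_growth j (S : seq (nat + (nat + nat))) : uniq S ->
  (forall s, s \in S -> (j <= day s)%N) ->
  mean P (fun w => (\prod_(s <- S) X s w) * \prod_(i < j) growth i w) =
  (\prod_(s <- S) mean P (X s)) * a ^+ j.
Proof.
pose F S' j' w := (\prod_(s <- S') X s w) * \prod_(i < j') growth i w.
have bF S' j' : bmeasurable (F S' j').
  apply: bmeasurableM (bmeasurable_prod_growth j'); apply: bmeasurable_prod.
  exact: bmeasurable_var X_itv.
elim: j S => [|j IHj] S uS Sj.
  under eq_fun do rewrite big_ord0 mulr1.
  by rewrite (mean_prod_indep mX indep X_itv) // expr0 mulr1.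
have day_notin s : day s = j -> s \notin S.
  by move=> sj; apply/negP => /Sj; rewrite sj ltnn.
have mean_cons s : day s = j ->
    mean P (F (s :: S) j) = mean P (X s) * (\prod_(s <- S) mean P (X s)) * a ^+ j.
  move=> sj; rewrite IHj ?big_cons //= ?day_notin // => s'.
  by rewrite inE => /predU1P[->|/Sj/ltnW//]; rewrite sj.
(* Expanding the factor g_j adds one variable of day j to each product. *)
rewrite (_ : (fun w => _) = fun w =>
    F S j w + F (inl j :: S) j w - K * F (inr (inr j) :: S) j w
    - F (inr (inl j) :: S) j w); last first.
  by apply/funext => w; rewrite /F big_ord_recr !big_cons /growth /=; ring.
have bS := bF S j; have bdelta := bF (inl j :: S) j; have bdI := bF (inr (inl j) :: S) j.
have bKv := bmeasurableM (bmeasurable_cst K) (bF (inr (inr j) :: S) j).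
rewrite meanB; [|exact: bmeasurableB (bmeasurableD bS bdelta) bKv|by []].
rewrite meanB; [|exact: bmeasurableD bS bdelta|by []].
rewrite meanD // meanZ //.
rewrite IHj ?mean_cons // => [|s /Sj/ltnW//].
rewrite /X /= /mean mean_delta mean_dI mean_v /= exprS /a; ring.
Qed.

Lemma mean_dI_prod_growth j :
  mean P (fun w => dI j w * \prod_(i < j) growth i w) = dI_bar * a ^+ j.
Proof.
have := @mean_prod_growth j [:: inr (inl j)] isT.
under eq_fun do rewrite big_seq1.
by rewrite big_seq1 /X /= /mean mean_dI /=; apply => s; rewrite inE => /eqP->.
Qed.

Lemma mean_deaths I0 (I D : nat -> T -> R) :
  (forall w, I 0%N w = I0) -> (forall k w, I k.+1 w = growth k w * I k w) ->
  (forall w, D 0%N w = 0) -> (forall k w, D k.+1 w = D k w + dI k w * I k w) ->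
  forall k, ('E_P[D k] = (I0 * dI_bar * \sum_(j < k) a ^+ j)%:E)%E.
Proof.
move=> I_0 I_S D_0 D_S k.
have I_prod j w : I j w = I0 * \prod_(i < j) growth i w.
  by elim: j => [|j IHj]; rewrite ?big_ord0 ?mulr1 // I_S IHj big_ord_recr /=; ring.
have bdI j : bmeasurable (dI j) := bmeasurable_var mX X_itv (inr (inl j)).
have bterm j : bmeasurable (fun w => dI j w * \prod_(i < j) growth i w).
  exact: bmeasurableM (bdI j) (bmeasurable_prod_growth j).
have bsum : bmeasurable (fun w => \sum_(j < k) dI j w * \prod_(i < j) growth i w).
  exact: bmeasurable_sum.
have -> : D k = fun w => I0 * \sum_(j < k) dI j w * \prod_(i < j) growth i w.
  apply/funext => w; elim: k {bsum} => [|k IHk]; first by rewrite big_ord0 D_0 mulr0.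
  by rewrite D_S IHk big_ord_recr /= I_prod; ring.
rewrite meanE ?meanZ ?mean_sum //; last exact: bmeasurableM (bmeasurable_cst I0) bsum.
by under eq_bigr do rewrite mean_dI_prod_growth; rewrite -mulrA -mulr_sumr.
Qed.

End epidemic.

Unset Implicit Arguments.

Theorem lemma11 (d : measure_display) (T : measurableType d) (R : realType)
  (P : probability T R)
  (delta dI v : nat -> T -> R)
  (delta_max d_max v_min v_max : R)
  (delta_bar dI_bar v_bar : R)
  (S0 I0 K : R)
  (S I Rc D u : nat -> T -> R) :
  (* random variables *)
  (forall k, measurable_fun setT (delta k)) ->
  (forall k, measurable_fun setT (dI k)) ->
  (forall k, measurable_fun setT (v k)) ->
  (* each sequence i.i.d., and the three sequences mutually independent *)
  mutually_independent P (three_seqs delta dI v) ->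
  identically_distributed P delta ->
  identically_distributed P dI ->
  identically_distributed P v ->
  (* bounds *)
  (forall k w, 0 <= delta k w <= delta_max) ->
  (forall k w, 0 <= dI k w <= d_max) -> d_max < 1 ->
  0 < v_min -> v_max <= 1 ->
  (forall k w, v_min <= v k w <= v_max) ->
  (* means *)
  (forall k, ('E_P[delta k] = delta_bar%:E)%E) ->
  (forall k, ('E_P[dI k] = dI_bar%:E)%E) ->
  (forall k, ('E_P[v k] = v_bar%:E)%E) ->
  (* dynamics *)
  (forall w, S 0%N w = S0) -> (forall w, I 0%N w = I0) ->
  (forall w, Rc 0%N w = 0) -> (forall w, D 0%N w = 0) ->
  0 < I0 -> I0 * delta_max < S0 ->
  (forall k w, S k.+1 w = S k w - delta k w * I k w) ->
  (forall k w, I k.+1 w = (1 + delta k w) * I k w - v k w * u k w - dI k w * I k w) ->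
  (forall k w, Rc k.+1 w = Rc k w + v k w * u k w) ->
  (forall k w, D k.+1 w = D k w + dI k w * I k w) ->
  (* proportional control *)
  0 <= K -> K <= (1 - d_max) / v_max ->
  (forall k w, u k w = K * I k w) ->
  forall k : nat, (1 <= k)%N ->
    (0 < K * v_bar - delta_bar + dI_bar ->
      ('E_P[D k] = (dI_bar * I0 * (1 - (1 + delta_bar - dI_bar - K * v_bar) ^+ k)
                    / (K * v_bar - delta_bar + dI_bar))%:E)%E) /\
    (K * v_bar - delta_bar + dI_bar = 0 ->
      ('E_P[D k] = (dI_bar * I0 * k%:R)%:E)%E).
Proof.
move=> mdelta mdI mv indep _ _ _ delta_itv dI_itv _ v_min_gt0 _ v_itv Edelta EdI Ev
  _ I_0 _ D_0 _ _ _ I_S _ D_S _ _ u_K k _.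
have mX : forall i, measurable_fun setT (three_seqs delta dI v i) by case=> [j|[j|j]] /=.
have X_itv : forall i w,
    0 <= three_seqs delta dI v i w <= `|delta_max| + `|d_max| + `|v_max|.
  move: (ler_norm delta_max) (ler_norm d_max) (ler_norm v_max) => ? ? ?.
  move: (normr_ge0 delta_max) (normr_ge0 d_max) (normr_ge0 v_max) => ? ? ?.
  case=> [j|[j|j]] w /=; [move: (delta_itv j w) | move: (dI_itv j w) | move: (v_itv j w)];
    move=> /andP[? ?]; apply/andP; split; lra.
have I_S' j w : I j.+1 w = growth delta dI v K j w * I j w by rewrite I_S u_K /growth; ring.
rewrite (mean_deaths mX indep X_itv Edelta EdI Ev I_0 I_S' D_0 D_S).
set a := 1 + delta_bar - dI_bar - K * v_bar.
have rate_a : K * v_bar - delta_bar + dI_bar = 1 - a by rewrite /a; ring.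
split=> [rate_gt0|rate_eq0]; congr (_%:E).
  have a_neq1 : 1 - a != 0 by rewrite -rate_a; apply/eqP; lra.
  by rewrite rate_a -[1 - a ^+ k]opprB subrX1; field.
have -> : a = 1 by apply/eqP; rewrite -subr_eq0 -opprB oppr_eq0 -rate_a rate_eq0.
by under eq_bigr do rewrite expr1n; rewrite sumr_const card_ord (mulrC I0).
Qed.
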